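(* Let $f:\mathbb{R}^n\to\mathbb{R}$ be locally Lipschitz continuous at $\bar x$ with local Lipschitz modulus $0$, i.e. $\limsup_{x,x'\to\bar x,\,x\ne x'}|f(x)-f(x')|/\|x-x'\|=0$. Then $\mathrm{epi}\, f=\{(x,t):t\ge f(x)\}$ is smoothly approximately convex at $(\bar x,\bar s)$ for every $\bar s\ge f(\bar x)$.
   Context: A set $C\subseteq\mathbb{R}^N$ is smoothly approximately convex at $\bar z\in C$ if for every $\epsilon>0$ there is a neighborhood $W$ of $\bar z$ such that for all $z,z'\in C\cap W$ there is a map $\gamma:[0,1]\to C$, extending to a $\mathcal{C}^{(1)}$ map on an open neighborhood of $[0,1]$, with $\gamma(0)=z,\gamma(1)=z'$ and $\|\gamma'(t)-(z'-z)\|\le\epsilon\|z'-z\|$ for all $t\in[0,1]$. *)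

From HB Require Import structures.
From mathcomp Require Import all_boot all_order all_algebra.
From mathcomp Require Import all_classical all_reals all_analysis.
Set Implicit Arguments. Unset Strict Implicit. Unset Printing Implicit Defensive.
Import Order.TTheory GRing.Theory Num.Theory.
Import numFieldNormedType.Exports.
Local Open Scope classical_set_scope.
Local Open Scope ring_scope.

Definition smoothly_approx_convex (R : realType) (V : normedModType R)
    (C : set V) (zbar : V) : Prop :=
  C zbar /\
  forall eps : R, 0 < eps ->
  exists W : set V, nbhs zbar W /\
  forall z z' : V, C z -> W z -> C z' -> W z' ->
  exists gamma : R -> V,
    (* gamma (restricted to [0,1]) extends to a C^1 map on an open nbhd U of [0,1] *)
    (exists U : set R, open U /\ `[0, 1]%classic `<=` U /\
        (forall t, U t -> derivable gamma t 1) /\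
        (forall t, U t -> {for t, continuous (fun s => 'D_1 gamma s)})) /\
    (forall t, `[0, 1]%classic t -> C (gamma t)) /\
    gamma 0 = z /\ gamma 1 = z' /\
    (forall t, `[0, 1]%classic t -> `|'D_1 gamma t - (z' - z)| <= eps * `|z' - z|).

Definition lip_modulus_zero (R : realType) (n : nat)
    (f : 'rV[R]_n -> R) (xbar : 'rV[R]_n) : Prop :=
  forall e : R, 0 < e -> exists d : R, 0 < d /\
  forall x x' : 'rV[R]_n, `|x - xbar| < d -> `|x' - xbar| < d ->
    `|f x - f x'| <= e * `|x - x'|.

Definition epi (R : realType) (n : nat) (f : 'rV[R]_n -> R)
  : set ('rV[R]_n * R^o)%type :=
  [set p | f p.1 <= p.2].

From HB Require Import structures.
From mathcomp Require Import all_boot all_order all_algebra.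
From mathcomp Require Import all_classical all_reals all_analysis.
From mathcomp Require Import lra.
Set Implicit Arguments. Unset Strict Implicit. Unset Printing Implicit Defensive.
Import Order.TTheory GRing.Theory Num.Theory.
Import numFieldNormedType.Exports.
Local Open Scope classical_set_scope.
Local Open Scope ring_scope.

(* Join z = (x, s) to z' = (x', s') in the epigraph by the segment lifted by the
   parabolic bump t (1 - t) (0, c), with c = eps |x' - x|.  Its velocity differs
   from z' - z by (1 - 2t) (0, c), of norm at most c <= eps |z' - z|.  Near xbar,
   f is (eps/2)-Lipschitz, so comparing f (x + t (x' - x)) with f x and f x'
   shows that f misses convexity along the segment by at most
   eps t (1 - t) |x' - x|, which is exactly what the bump absorbs. *)

Lemma is_deriveZl (R : realType) (U V : normedModType R) (g : U -> R) (w : V)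
    (x v : U) (dg : R) :
  is_derive x v g dg -> is_derive x v (fun u => g u *: w) (dg *: w).
Proof.
move=> [dgx <-].
have quotE : (fun h : R => h^-1 *: (g (h *: v + x) *: w - g x *: w))
    = (fun h : R => (h^-1 *: (g (h *: v + x) - g x)) *: w).
  by apply/funext => h; rewrite -scalerBl scalerA.
have dZ : (fun h : R => h^-1 *: (g (h *: v + x) *: w - g x *: w)) @ 0^'
    --> 'D_v g x *: w.
  by rewrite quotE; apply: cvgZr_tmp; exact: dgx.
by apply: DeriveDef; [apply/cvg_ex; exists ('D_v g x *: w) | exact: cvg_lim].
Qed.

Section BumpedSegment.
Variables (R : realType) (V : normedModType R).

Definition bumped_segment (z w b : V) (t : R) : V := z + t *: w + (t * (1 - t)) *: b.

Global Instance is_derive_bumped_segment (z w b : V) (t : R) :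
  is_derive t 1 (bumped_segment z w b) (w + (1 - t *+ 2) *: b).
Proof.
have dw := is_deriveZl w (is_derive_id t 1).
have dbump : is_derive t 1 (fun s : R => s * (1 - s)) (1 - t *+ 2).
  have := is_deriveM (is_derive_id t 1)
    (is_deriveB (is_derive_cst (1 : R) t 1) (is_derive_id t 1)).
  move=> /is_derive_eq; apply.
  by rewrite /= [_%:A]mulr1 -[t *: _]/(t * _) add0r mulrN1 addrC mulr2n opprD addrA.
have := is_deriveD (is_deriveD (is_derive_cst z t 1) dw) (is_deriveZl b dbump).
move=> /is_derive_eq; apply.
by rewrite add0r scale1r.
Qed.

Implicit Types (z w b : V) (t : R).

Lemma derivable_bumped_segment z w b t : derivable (bumped_segment z w b) t 1.
Proof. exact: ex_derive. Qed.

Lemma derive_bumped_segment z w b t :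
  'D_1 (bumped_segment z w b) t = w + (1 - t *+ 2) *: b.
Proof. exact: derive_val. Qed.

Lemma continuous_derive_bumped_segment z w b :
  continuous (fun t => 'D_1 (bumped_segment z w b) t).
Proof.
move=> t; under eq_fun do rewrite derive_bumped_segment.
apply: cvgD; first exact: cvg_cst.
by apply: cvgZr_tmp; apply: cvgB; [exact: cvg_cst | exact: cvgMn].
Qed.

Lemma bumped_segment0 z w b : bumped_segment z w b 0 = z.
Proof. by rewrite /bumped_segment !scale0r mul0r scale0r !addr0. Qed.

Lemma bumped_segment1 z w b : bumped_segment z w b 1 = z + w.
Proof. by rewrite /bumped_segment subrr mulr0 scale0r addr0 scale1r. Qed.

Lemma norm_derive_bumped_segment_sub z w b t : 0 <= t <= 1 ->
  `|'D_1 (bumped_segment z w b) t - w| <= `|b|.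
Proof.
move=> /andP[t0 t1]; rewrite derive_bumped_segment addrAC subrr add0r normrZ.
by rewrite ler_piMl // ler_norml; apply/andP; split; lra.
Qed.
End BumpedSegment.

Section LipschitzOnBall.
Variables (R : realType) (V : normedModType R) (f : V -> R) (c : V) (d e : R).
Hypothesis f_lip : forall y y' : V, `|y - c| < d -> `|y' - c| < d ->
  `|f y - f y'| <= e * `|y - y'|.

Lemma segment_in_ball (x x' : V) (t : R) :
  0 <= t <= 1 -> `|x - c| < d -> `|x' - c| < d -> `|x + t *: (x' - x) - c| < d.
Proof.
move=> /andP[t0 t1] xc x'c.
have -> : x + t *: (x' - x) - c = (1 - t) *: (x - c) + t *: (x' - c).
  by rewrite scalerBl scale1r [RHS]addrAC -[RHS]addrA -scalerBr opprB addrA subrK addrAC.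
apply: le_lt_trans (ler_normD _ _) _.
rewrite !normrZ ger0_norm ?subr_ge0 // ger0_norm //.
set m := Num.max `|x - c| `|x' - c|.
have [mx mx'] : `|x - c| <= m /\ `|x' - c| <= m by rewrite !le_max !lexx orbT.
have : m < d by rewrite gt_max xc x'c.
nra.
Qed.

Lemma lipschitz_convexity_defect (x x' : V) (t : R) :
  0 <= t <= 1 -> `|x - c| < d -> `|x' - c| < d ->
  f (x + t *: (x' - x)) <= (1 - t) * f x + t * f x' + e *+ 2 * (t * (1 - t)) * `|x' - x|.
Proof.
move=> t01 xc x'c; have /andP[t0 t1] := t01.
set y := x + t *: (x' - x).
have yc := segment_in_ball t01 xc x'c.
have yx : `|y - x| = t * `|x' - x|.
  by rewrite /y addrAC subrr add0r normrZ ger0_norm.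
have yx' : `|y - x'| = (1 - t) * `|x' - x|.
  by rewrite /y addrAC -opprB -scaleN1r -scalerDl normrZ addrC distrC ger0_norm ?subr_ge0.
have := ler_normlW (f_lip yc xc); have := ler_normlW (f_lip yc x'c).
rewrite yx yx'; nra.
Qed.

Lemma bumped_segment_in_epigraph (x x' : V) (s s' t : R) :
  0 <= t <= 1 -> `|x - c| < d -> `|x' - c| < d -> f x <= s -> f x' <= s' ->
  [set p : V * R^o | f p.1 <= p.2]
    (bumped_segment ((x, s) : V * R^o) ((x', s') - (x, s)) (0, e *+ 2 * `|x' - x|) t).
Proof.
move=> t01 xc x'c fxs fx's'; have /andP[t0 t1] := t01.
rewrite /= scaler0 addr0.
apply: le_trans (lipschitz_convexity_defect t01 xc x'c) _.
rewrite -[_ *: (s' - s)]/(t * (s' - s)) -[_ *: (e *+ 2 * _)]/(_ * (e *+ 2 * _)).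
nra.
Qed.
End LipschitzOnBall.

Theorem proposition3p4 (R : realType) (n : nat) (f : 'rV[R]_n -> R)
  (xbar : 'rV[R]_n) :
  lip_modulus_zero f xbar ->
  forall sbar : R, f xbar <= sbar ->
  smoothly_approx_convex (epi f) ((xbar, sbar) : ('rV[R]_n * R^o)%type).
Proof.
move=> f_lip0 sbar fxbar; split=> // eps eps_gt0.
have [d [d_gt0 f_lip]] := f_lip0 (eps / 2) (divr_gt0 eps_gt0 (ltr0Sn _ 1)).
exists (ball (xbar, sbar) d); split; first exact: nbhsx_ballx.
move=> [x s] [x' s'] fxs [/= xW _] fx's' [/= x'W _].
rewrite -ball_normE /= distrC in xW; rewrite -ball_normE /= distrC in x'W.
exists (bumped_segment ((x, s) : 'rV[R]_n * R^o) ((x', s') - (x, s))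
                       (0, eps / 2 *+ 2 * `|x' - x|)).
split; [|split; [|split; [|split]]].
- exists setT; split; [exact: openT | split=> //].
  split=> t _; [exact: derivable_bumped_segment | exact: continuous_derive_bumped_segment].
- by move=> t; rewrite in_itv => t01; apply: (bumped_segment_in_epigraph f_lip t01 xW x'W fxs fx's').
- exact: bumped_segment0.
- by rewrite bumped_segment1 addrC subrK.
move=> t; rewrite in_itv => t01.
apply: le_trans (norm_derive_bumped_segment_sub _ _ _ t01) _.
rewrite mulr2n -splitr !prod_normE /= normr0 normrM normr_id ger0_norm ?(ltW eps_gt0) //.
by rewrite ge_max mulr_ge0 ?(ltW eps_gt0) //= ler_wpM2l ?(ltW eps_gt0) // le_max lexx.
Qed.
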